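(* Let $M=\frac32-\sqrt2$ and for $\xi\in[0,\frac14]$ define $$G_\xi(w,f)=(1-f)\,y\left(\tfrac12-y\right)+4M\xi\cdot\frac{w}{1-f},\qquad y=1-\frac{w}{1-f}.$$ Let $\kappa=\frac{1019}{1000}$. For all $w_1,w_2,w_3\in[0,\frac12]$ and $f_1,f_2,f_3\in[0,\frac12]$ such that $\frac{1-f_i}{2}\le w_i\le1-f_i$ for $i=1,2,3$, and for every $\xi\in[0,\frac14]$, $$\tfrac12\bigl(G_\xi(w_1,f_1)+G_\xi(w_2,f_2)\bigr)\le\kappa\cdot G_\xi\!\left(\tfrac{w_1+w_2}{2},\tfrac{f_1+f_2}{2}\right),$$ $$\tfrac13\bigl(G_\xi(w_1,f_1)+G_\xi(w_2,f_2)+G_\xi(w_3,f_3)\bigr)\le\kappa\cdot G_\xi\!\left(\tfrac{w_1+w_2+w_3}{3},\tfrac{f_1+f_2+f_3}{3}\right).$$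
   Context: Here $(1-f)y(\frac12-y)$ with $y=1-\frac{w}{1-f}$ is the quantity $\frac{1-f}{\Phi(1-\frac w{1-f})}$ for the potential $\Phi(x)=\frac{1}{x(\frac12-x)}$; $M=\frac32-\sqrt2=\sup_{0\le x\le1/2}\frac{x(\frac12-x)}{1-x}$. *)

From Stdlib Require Import Reals.
Open Scope R_scope.

Definition Mconst : R := 3/2 - sqrt 2.

Definition G (xi w f : R) : R :=
  let y := 1 - w / (1 - f) in
  (1 - f) * y * (1/2 - y) + 4 * Mconst * xi * (w / (1 - f)).

Definition kappa : R := 1019 / 1000.

Definition admissible (w f : R) : Prop :=
  0 <= w <= 1/2 /\ 0 <= f <= 1/2 /\ (1 - f) / 2 <= w <= 1 - f.

(** With [g = 1 - f], [G_xi] is the degree-one homogeneous function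
    [G_homog c w g = (g - w)(2w - g)/(2g) + c w/g] with [c = 4 M xi <= M < 1/10].
    The first part is concave and nonnegative on [g/2 <= w <= g].  The second
    is not concave, but [G_homog] lies below its tangent plane at [(wb, gb)]
    up to an error [(kappa - 1) c/2] whenever [c (g - gb)^2 <= 2 (kappa - 1) g gb^2],
    which holds when [gb] is the mean of two or three values of [g] in [[1/2, 1]].
    Averaging the tangent bounds cancels the gradient terms, and the error is
    absorbed by [c/2 <= G_homog c wb gb]. *)

From Stdlib Require Import Reals Lra Psatz.
Open Scope R_scope.

Definition G_homog (c w g : R) : R := - (w * w) / g + 3/2 * w - g / 2 + c * w / g.

Definition G_homog_dw (c w g : R) : R := - 2 * w / g + 3/2 + c / g.

Definition G_homog_dg (c w g : R) : R := w * w / (g * g) - 1/2 - c * w / (g * g).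

Lemma G_homogE xi w f : f < 1 -> G xi w f = G_homog (4 * Mconst * xi) w (1 - f).
Proof. intros Hf; unfold G, G_homog; field; lra. Qed.

Lemma G_homog_factored c w g : 0 < g ->
  G_homog c w g = (g - w) * (2 * w - g) / (2 * g) + c * w / g.
Proof. intros Hg; unfold G_homog; field; lra. Qed.

Lemma G_homog_ge_half c w g : 0 <= c -> 0 < g -> g / 2 <= w <= g ->
  c / 2 <= G_homog c w g.
Proof.
  intros Hc Hg Hw; rewrite G_homog_factored by lra.
  assert (0 <= (g - w) * (2 * w - g) / (2 * g)).
  { apply Rmult_le_pos; [nra | apply Rlt_le, Rinv_0_lt_compat; lra]. }
  assert (c / 2 <= c * w / g).
  { apply Rmult_le_reg_r with g; [lra|]. field_simplify; nra. }
  lra.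
Qed.

Lemma G_homog_tangent_gap c w g wb gb : 0 < g -> 0 < gb ->
  G_homog c w g - G_homog c wb gb
    - G_homog_dw c wb gb * (w - wb) - G_homog_dg c wb gb * (g - gb)
  = (c * (g - gb) * (wb * g - w * gb) - (wb * g - w * gb) ^ 2) / (g * gb ^ 2).
Proof.
  intros Hg Hgb; unfold G_homog, G_homog_dw, G_homog_dg; field; lra.
Qed.

Lemma G_homog_tangent c eps w g wb gb : 0 <= c -> 0 < g -> 0 < gb ->
  c * (g - gb) ^ 2 <= 2 * eps * g * gb ^ 2 ->
  G_homog c w g <= G_homog c wb gb
    + G_homog_dw c wb gb * (w - wb) + G_homog_dg c wb gb * (g - gb) + eps * c / 2.
Proof.
  intros Hc Hg Hgb Hdev.
  set (X := wb * g - w * gb).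
  assert (Hgap := G_homog_tangent_gap c w g wb gb Hg Hgb); fold X in Hgap.
  (* AM-GM: [c (g - gb) X - X^2 <= (c (g - gb))^2 / 4] *)
  assert (Hnum : c * (g - gb) * X - X ^ 2 <= eps * c / 2 * (g * gb ^ 2)).
  { assert (0 <= (X - c * (g - gb) / 2) ^ 2) by apply pow2_ge_0.
    assert (c * (c * (g - gb) ^ 2) <= c * (2 * eps * g * gb ^ 2))
      by (apply Rmult_le_compat_l; assumption).
    nra. }
  assert (Hpos : 0 < g * gb ^ 2) by (apply Rmult_lt_0_compat; [|apply pow_lt]; lra).
  assert ((c * (g - gb) * X - X ^ 2) / (g * gb ^ 2) <= eps * c / 2).
  { apply Rmult_le_reg_r with (g * gb ^ 2); [exact Hpos|].
    unfold Rdiv at 1; rewrite Rmult_assoc, Rinv_l, Rmult_1_r by lra; exact Hnum. }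
  lra.
Qed.

Section Means.

Variable c : R.
Hypothesis c_bounds : 0 <= c <= 1/10.

(* [gb] ranges over the means of [g] with up to two further values in [[1/2, 1]]. *)
Lemma mean_deviation g gb : 1/2 <= g <= 1 -> (g + 1) / 3 <= gb <= (g + 2) / 3 ->
  c * (g - gb) ^ 2 <= 2 * (kappa - 1) * g * gb ^ 2.
Proof.
  intros Hg Hgb; unfold kappa.
  assert (c * (g - gb) ^ 2 <= 1/10 * (g - gb) ^ 2)
    by (apply Rmult_le_compat_r; [apply pow2_ge_0 | lra]).
  assert ((g - gb) ^ 2 <= 38/100 * g * gb ^ 2).
  { assert (0 <= (gb - (g + 1) / 3) * ((g + 2) / 3 - gb)) by nra.
    assert (0 <= (g - 1/2) * (1 - g)) by nra.
    nra. }
  lra.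
Qed.

Lemma G_homog_mean2 w1 w2 g1 g2 :
  1/2 <= g1 <= 1 -> g1 / 2 <= w1 <= g1 ->
  1/2 <= g2 <= 1 -> g2 / 2 <= w2 <= g2 ->
  1/2 * (G_homog c w1 g1 + G_homog c w2 g2)
    <= kappa * G_homog c ((w1 + w2) / 2) ((g1 + g2) / 2).
Proof.
  intros Hg1 Hw1 Hg2 Hw2.
  set (wb := (w1 + w2) / 2); set (gb := (g1 + g2) / 2).
  assert (Hdev1 := mean_deviation g1 gb Hg1 ltac:(unfold gb; lra)).
  assert (Hdev2 := mean_deviation g2 gb Hg2 ltac:(unfold gb; lra)).
  assert (T1 := G_homog_tangent c _ w1 g1 wb gb ltac:(lra) ltac:(lra) ltac:(unfold gb; lra) Hdev1).
  assert (T2 := G_homog_tangent c _ w2 g2 wb gb ltac:(lra) ltac:(lra) ltac:(unfold gb; lra) Hdev2).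
  assert (Hb := G_homog_ge_half c wb gb ltac:(lra) ltac:(unfold gb; lra) ltac:(unfold wb, gb; lra)).
  set (a := G_homog_dw c wb gb) in *; set (b := G_homog_dg c wb gb) in *.
  clearbody a b; unfold wb, gb, kappa in *; lra.
Qed.

Lemma G_homog_mean3 w1 w2 w3 g1 g2 g3 :
  1/2 <= g1 <= 1 -> g1 / 2 <= w1 <= g1 ->
  1/2 <= g2 <= 1 -> g2 / 2 <= w2 <= g2 ->
  1/2 <= g3 <= 1 -> g3 / 2 <= w3 <= g3 ->
  1/3 * (G_homog c w1 g1 + G_homog c w2 g2 + G_homog c w3 g3)
    <= kappa * G_homog c ((w1 + w2 + w3) / 3) ((g1 + g2 + g3) / 3).
Proof.
  intros Hg1 Hw1 Hg2 Hw2 Hg3 Hw3.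
  set (wb := (w1 + w2 + w3) / 3); set (gb := (g1 + g2 + g3) / 3).
  assert (Hdev1 := mean_deviation g1 gb Hg1 ltac:(unfold gb; lra)).
  assert (Hdev2 := mean_deviation g2 gb Hg2 ltac:(unfold gb; lra)).
  assert (Hdev3 := mean_deviation g3 gb Hg3 ltac:(unfold gb; lra)).
  assert (T1 := G_homog_tangent c _ w1 g1 wb gb ltac:(lra) ltac:(lra) ltac:(unfold gb; lra) Hdev1).
  assert (T2 := G_homog_tangent c _ w2 g2 wb gb ltac:(lra) ltac:(lra) ltac:(unfold gb; lra) Hdev2).
  assert (T3 := G_homog_tangent c _ w3 g3 wb gb ltac:(lra) ltac:(lra) ltac:(unfold gb; lra) Hdev3).
  assert (Hb := G_homog_ge_half c wb gb ltac:(lra) ltac:(unfold gb; lra) ltac:(unfold wb, gb; lra)).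
  set (a := G_homog_dw c wb gb) in *; set (b := G_homog_dg c wb gb) in *.
  clearbody a b; unfold wb, gb, kappa in *; lra.
Qed.

End Means.

Lemma Mconst_bounds : 0 <= Mconst <= 1/10.
Proof.
  unfold Mconst.
  assert (sqrt (14/10 * (14/10)) <= sqrt 2) by (apply sqrt_le_1_alt; lra).
  assert (sqrt 2 <= sqrt (3/2 * (3/2))) by (apply sqrt_le_1_alt; lra).
  rewrite !sqrt_square in * by lra; lra.
Qed.

Theorem lemma23 (w1 w2 w3 f1 f2 f3 xi : R) :
  admissible w1 f1 -> admissible w2 f2 -> admissible w3 f3 ->
  0 <= xi <= 1/4 ->
  (1/2) * (G xi w1 f1 + G xi w2 f2)
    <= kappa * G xi ((w1 + w2) / 2) ((f1 + f2) / 2)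
  /\
  (1/3) * (G xi w1 f1 + G xi w2 f2 + G xi w3 f3)
    <= kappa * G xi ((w1 + w2 + w3) / 3) ((f1 + f2 + f3) / 3).
Proof.
  unfold admissible; intros A1 A2 A3 Hxi.
  assert (Hc : 0 <= 4 * Mconst * xi <= 1/10) by (pose proof Mconst_bounds; nra).
  rewrite !G_homogE by lra.
  replace (1 - (f1 + f2) / 2) with (((1 - f1) + (1 - f2)) / 2) by field.
  replace (1 - (f1 + f2 + f3) / 3) with (((1 - f1) + (1 - f2) + (1 - f3)) / 3) by field.
  split; [apply G_homog_mean2 | apply G_homog_mean3]; lra.
Qed.
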